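(* Let $T$ be an admissible LCA-tree with $n$ leaves and let $z$ be a positive integer. Define sets of leaves $\mathbf{C}_0=\emptyset$ and, for $i=1,\dots,n$, $\mathbf{C}_i=\mathbf{C}_{i-1}\cup\{c_i\}$, where $c_i$ is any leaf not in $\mathbf{C}_{i-1}$ that maximizes the cost-decrease $\mathrm{Cost}_z(T,\mathbf{C}_{i-1})-\mathrm{Cost}_z(T,\mathbf{C}_{i-1}\cup\{c_i\})$ (equivalently, minimizes $\mathrm{Cost}_z(T,\mathbf{C}_{i-1}\cup\{c_i\})$; with the convention $\mathrm{Cost}_z(T,\emptyset)=+\infty$). Then for every $k\in\{1,\dots,n\}$, $\mathbf{C}_k$ minimizes $\mathrm{Cost}_z(T,\mathbf{C})$ over all sets $\mathbf{C}$ of $k$ distinct leaves of $T$.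
   Context: An LCA-tree is a finite rooted tree $T$ in which every node $\eta$ (leaves included) carries a real value $d(\eta)$; for leaves $\ell_i,\ell_j$, $d(\ell_i,\ell_j)=d(\ell_i\lor\ell_j)$, where $\ell_i\lor\ell_j$ is their lowest common ancestor ($\ell\lor\ell=\ell$). It is admissible if $d(\eta)\ge0$ for all nodes and $d(\eta)\le d(\mathrm{parent}(\eta))$ for every non-root node. For a set $\mathbf{C}$ of leaves, $\mathrm{Cost}_z(T,\mathbf{C})=\sum_{\ell\text{ leaf of }T}\min_{c\in\mathbf{C}} d(\ell,c)^z$. *)

From HB Require Import structures.
From mathcomp Require Import all_boot all_order all_algebra.
From mathcomp Require Import reals constructive_ereal.

Set Implicit Arguments.
Unset Strict Implicit.
Unset Printing Implicit Defensive.
Import Order.TTheory GRing.Theory Num.Theory.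
Local Open Scope ring_scope.
Local Open Scope ereal_scope.

Definition is_rooted_tree (V : finType) (parent : V -> V) (root : V) : Prop :=
  parent root = root /\ forall v : V, iter #|V| parent v = root.

Definition anc (V : finType) (parent : V -> V) (u v : V) : bool :=
  [exists k : 'I_#|V|.+1, iter k parent v == u].

(* v is a leaf: it has no child (the root is its own parent, not a child). *)
Definition leaf (V : finType) (parent : V -> V) (v : V) : bool :=
  [forall u : V, (parent u == v) ==> (u == v)].

Definition leaves (V : finType) (parent : V -> V) : {set V} :=
  [set v | leaf parent v].

(* lowest common ancestor: a common ancestor that is below every common
   ancestor (default root, never used in a rooted tree). *)
Definition lca (V : finType) (parent : V -> V) (root : V) (a b : V) : V :=
  odflt root [pick w | [&& anc parent w a, anc parent w b &
     [forall u, (anc parent u a && anc parent u b) ==> anc parent u w]]].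

Definition admissible (R : realType) (V : finType) (parent : V -> V) (root : V)
  (d : V -> R) : Prop :=
  (forall v, (0 <= d v)%R) /\ (forall v, v != root -> (d v <= d (parent v))%R).

Definition cost (R : realType) (V : finType) (parent : V -> V) (root : V)
  (d : V -> R) (z : nat) (C : {set V}) : \bar R :=
  \sum_(l in leaves parent) \big[mine/+oo]_(c in C) ((d (lca parent root l c)) ^+ z)%:E.

From HB Require Import structures.
From mathcomp Require Import all_boot all_order all_algebra.
From mathcomp Require Import reals constructive_ereal.
From mathcomp Require Import lra.
Import Order.TTheory GRing.Theory Num.Theory.

Set Implicit Arguments.

Local Open Scope ring_scope.

(* The weights dist(a, b) = d(a v b)^z form an ultrametric: the common ancestors
   of b form a chain, so of a v b and b v c the higher one is a common ancestor
   of a and c. For an ultrametric, Phi(C) = sum_l min_(c in C) dist(l, c)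
   satisfies an exchange property: for x in X \ Y, either moving x from X to Y,
   or swapping x with its nearest point y of Y, does not increase
   Phi(X) + Phi(Y). As for valuated matroids, this makes greedy optimal: if C_k
   is an optimal k-set and c its best extension, any (k+1)-set C can be swapped,
   one point at a time and without increasing its cost, into some C_k + x,
   which costs at least Phi(C_k + c). *)

Lemma add_min_exchange (R : realDomainType) (a p q : R) :
  (a < p -> p <= q) -> p + Order.min a q <= Order.min a p + q.
Proof. by move=> apq; case: (ltP a p) => [/apq ?|?]; case: (leP a q) => ?; lra. Qed.

Lemma add_min_swap (R : realDomainType) (a b p q : R) :
  (a < b -> b <= p /\ b <= q) -> (b < a -> a <= p) ->
  Order.min b p + Order.min a q <= Order.min a p + Order.min b q.
Proof.
move=> ab_le ba_le; case: (ltgtP a b) => [/ab_le[] ? ?|/ba_le ?|->]; last exact: lexx.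
all: case: (leP a p); case: (leP b p); case: (leP a q); case: (leP b q); lra.
Qed.

Lemma swap_subset {T : finType} {A B : {set T}} (x : T) {y : T} :
  y \in B -> A \subset B -> y |: (A :\ x) \subset B.
Proof. by move=> yB AB; rewrite subUset sub1set yB (subset_trans (subD1set A x)). Qed.

Lemma swap_card {T : finType} {A : {set T}} {x y : T} :
  y \notin A -> x \in A -> #|y |: (A :\ x)| = #|A|.
Proof. by move=> yA xA; rewrite cardsU1 !inE negb_and yA orbT (cardsD1 x A) xA. Qed.

Section UltrametricSetDistance.

Context {R : realDomainType} {V : finType}.
Variables (dist : V -> V -> R) (D : R).
Hypothesis dist_sym : forall a b, dist a b = dist b a.
Hypothesis dist_ultra : forall a b c, dist a c <= Order.max (dist a b) (dist b c).
Hypothesis dist_le_bound : forall a b, dist a b <= D.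
Implicit Types (l x y c : V) (C G X Y : {set V}).

Lemma dist_ultra_ge l x c t : dist l x < t -> t <= dist x c -> t <= dist l c.
Proof.
move=> lxt txc; have := le_trans txc (dist_ultra x l c).
by rewrite le_max [dist x l]dist_sym leNgt lxt.
Qed.

(* The empty set is at distance [D] rather than +oo. *)
Definition setdist (l : V) (C : {set V}) : R := \big[Order.min/D]_(c in C) dist l c.

Lemma setdistD1 l C x : x \in C -> setdist l C = Order.min (dist l x) (setdist l (C :\ x)).
Proof.
move=> xC; rewrite /setdist (bigminD1 x) //; f_equal.
by apply: eq_bigl => c; rewrite !inE andbC.
Qed.

Lemma setdistU1 l {C x} : x \notin C -> setdist l (x |: C) = Order.min (dist l x) (setdist l C).
Proof. by move=> xC; rewrite (setdistD1 l (setU11 x C)) setU1K. Qed.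

Lemma setdist_le l C c : c \in C -> setdist l C <= dist l c.
Proof. exact: bigmin_le_cond. Qed.

Lemma setdist_le_bound l C : setdist l C <= D.
Proof. exact: bigmin_le_id. Qed.

Lemma le_setdist l C t : t <= D -> (forall c, c \in C -> t <= dist l c) -> t <= setdist l C.
Proof. by move=> tD tC; apply/bigmin_geP. Qed.

Lemma setdist_attained l {C} : C != set0 -> exists2 y, y \in C & setdist l C = dist l y.
Proof.
case/set0Pn=> c0 c0C.
by have [y yC eq_y] := eq_bigmin c0 _ _ c0C (fun c _ => dist_le_bound l c); exists y.
Qed.

Lemma setdist_EFin l C : C != set0 ->
  \big[Order.min/+oo%E]_(c in C) (dist l c)%:E = (setdist l C)%:E.
Proof.
move=> C0; have [y yC Cy] := setdist_attained l C0.
apply/le_anti/andP; split; first by rewrite Cy bigmin_le_cond.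
apply/bigmin_geP; split=> [|c cC]; first exact: leey.
by rewrite lee_fin setdist_le.
Qed.

Lemma setdist_move l x X Y : x \in X -> x \notin Y -> setdist x (X :\ x) <= setdist x Y ->
  setdist l (X :\ x) + setdist l (x |: Y) <= setdist l X + setdist l Y.
Proof.
move=> xX xY xXY; rewrite (setdistD1 l xX) (setdistU1 l xY).
apply: add_min_exchange => lx_lt.
have lX_le : setdist l (X :\ x) <= setdist x (X :\ x).
  apply: le_setdist => [|c cX]; first exact: setdist_le_bound.
  by apply: (@dist_ultra_ge x l c); [rewrite dist_sym | exact: setdist_le].
apply: le_setdist => [|y yY]; first exact: setdist_le_bound.
apply: (@dist_ultra_ge l x y) lx_lt _.
exact: le_trans lX_le (le_trans xXY (setdist_le _ yY)).
Qed.

Lemma setdist_swap l x y X Y : x \in X -> x \notin Y -> y \in Y -> y \notin X ->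
  setdist x Y = dist x y -> setdist x Y < setdist x (X :\ x) ->
  setdist l (y |: (X :\ x)) + setdist l (x |: (Y :\ y)) <= setdist l X + setdist l Y.
Proof.
move=> xX xY yY yX xY_y xY_lt.
have yX' : y \notin X :\ x by rewrite !inE negb_and yX orbT.
have xY' : x \notin Y :\ y by rewrite !inE negb_and xY orbT.
rewrite (setdistU1 l yX') (setdistU1 l xY').
rewrite (setdistD1 l xX) (setdistD1 l yY).
have far_X c : c \in X :\ x -> dist x y < dist x c.
  by move=> cX; rewrite -xY_y (lt_le_trans xY_lt) ?setdist_le.
have far_Y c : c \in Y :\ y -> dist x y <= dist x c.
  by rewrite inE => /andP[_ cY]; rewrite -xY_y setdist_le.
apply: add_min_swap => [lx_ly | ly_lx].
- have ly_xy : dist l y <= dist x y.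
    by apply: (@dist_ultra_ge x l y); rewrite 1?dist_sym.
  split; apply: le_setdist => [|c cZ]; rewrite ?dist_le_bound //;
    apply: (@dist_ultra_ge l x c) lx_ly (le_trans ly_xy _).
    exact/ltW/far_X.
  exact: far_Y.
- have lx_xy : dist l x <= dist x y.
    by rewrite [dist x y]dist_sym; apply: (@dist_ultra_ge y l x); rewrite 1?dist_sym.
  apply: le_setdist => [|c cX]; first exact: dist_le_bound.
  have lx_xc := le_lt_trans lx_xy (far_X c cX).
  exact: le_trans (ltW lx_xc) (@dist_ultra_ge l x c _ lx_xc (lexx _)).
Qed.

Definition sumdist (L C : {set V}) : R := \sum_(l in L) setdist l C.

Lemma sumdist_exchange L {x X Y} : x \in X -> x \notin Y ->
  sumdist L (X :\ x) + sumdist L (x |: Y) <= sumdist L X + sumdist L Y \/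
  exists2 y, y \in Y :\: X &
    sumdist L (y |: (X :\ x)) + sumdist L (x |: (Y :\ y)) <= sumdist L X + sumdist L Y.
Proof.
move=> xX xY; rewrite /sumdist -!big_split /=.
have [xXY|xYX] := leP (setdist x (X :\ x)) (setdist x Y).
  by left; apply: ler_sum => l _; apply: setdist_move.
have /(setdist_attained x) [y yY xY_y] : Y != set0.
  apply: contraTneq xYX => ->; rewrite -leNgt /setdist big_set0.
  exact: setdist_le_bound.
have yX : y \notin X.
  apply: contraTN xYX => yX; rewrite -leNgt xY_y setdist_le // !inE yX andbT.
  by apply: contraNneq xY => <-.
right; exists y; first by rewrite inE yX.
by rewrite -big_split; apply: ler_sum => l _; apply: setdist_swap.
Qed.

Variable L : {set V}.

Definition sumdist_optimal k G :=
  [/\ G \subset L, #|G| = k & forall C, C \subset L -> #|C| = k -> sumdist L G <= sumdist L C].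

Lemma sumdist_optimal0 : sumdist_optimal 0 set0.
Proof. by split=> [||C _ /cards0_eq ->]; rewrite ?sub0set ?cards0. Qed.

Lemma greedy_step k G c : sumdist_optimal k G -> c \in L -> c \notin G ->
  (forall c', c' \in L -> c' \notin G -> sumdist L (c |: G) <= sumdist L (c' |: G)) ->
  sumdist_optimal k.+1 (c |: G).
Proof.
move=> [GL Gk Gopt] cL cG c_best; split.
- by rewrite subUset sub1set cL.
- by rewrite cardsU1 cG Gk.
(* Induction on #|C :\: G|: the exchange either turns C into a k-set plus a
   point, or swaps C one point closer to G. *)
move=> C; have [n] := ubnP #|C :\: G|; elim: n C => // n IHn C CGn CL Ck.
have [x xC xG] : exists2 x, x \in C & x \notin G.
  by apply/subsetPn/negP => /subset_leq_card; rewrite Ck Gk ltnn.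
have xL := subsetP CL x xC.
case: (sumdist_exchange L xC xG) => [move_le | [y /setDP[yG yC] swap_le]].
  have Cx_k : #|C :\ x| = k by move: Ck; rewrite (cardsD1 x) xC => -[].
  have G_le := Gopt _ (subset_trans (subD1set C x) CL) Cx_k.
  have := c_best x xL xG; lra.
have G_le := Gopt _ (swap_subset y xL GL) (etrans (swap_card xG yG) Gk).
have C_swap_ge : sumdist L (c |: G) <= sumdist L (y |: (C :\ x)).
  apply: IHn (swap_subset x (subsetP GL y yG) CL) (etrans (swap_card yC xC) Ck).
  have -> : (y |: (C :\ x)) :\: G = (C :\: G) :\ x.
    apply/setP => u; rewrite !inE.
    by case: (eqVneq u y) => [->|_]; rewrite ?yG ?andbF //= andbCA.
  by move: CGn; rewrite (cardsD1 x (C :\: G)) !inE xC xG.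
lra.
Qed.

Lemma greedy_sumdist_optimal (G : nat -> {set V}) : G 0%N = set0 ->
  (forall i, (1 <= i <= #|L|)%N -> exists c, [/\ c \in L, c \notin G i.-1, G i = c |: G i.-1 &
     forall c', c' \in L -> c' \notin G i.-1 ->
       sumdist L (c |: G i.-1) <= sumdist L (c' |: G i.-1)]) ->
  forall k, (k <= #|L|)%N -> sumdist_optimal k (G k).
Proof.
move=> G0 G_greedy; elim=> [_|k IHk kL]; first by rewrite G0; exact: sumdist_optimal0.
have [c [cL cG -> c_best]] := G_greedy k.+1 kL.
exact: greedy_step (IHk (ltnW kL)) cL cG c_best.
Qed.

End UltrametricSetDistance.

Section RootedTree.

Context {V : finType}.
Variables (parent : V -> V) (root : V).
Hypothesis tree : is_rooted_tree parent root.
Implicit Types (u v w a b c : V).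

Lemma iter_parent_root n v : (#|V| <= n)%N -> iter n parent v = root.
Proof.
case: tree => parent_root reach_root le_n.
by rewrite -(subnK le_n) iterD reach_root iter_fix.
Qed.

Lemma ancP u v : reflect (exists n, iter n parent v = u) (anc parent u v).
Proof.
apply: (iffP existsP) => [[k /eqP <-]|[n <-]]; first by exists k.
have [le_nV|lt_Vn] := leqP n #|V|; first by exists (inord n); rewrite inordK.
by exists ord_max; rewrite /= !iter_parent_root // ltnW.
Qed.

Lemma anc_trans {u v w} : anc parent u v -> anc parent v w -> anc parent u w.
Proof.
move=> /ancP[m <-] /ancP[n <-]; apply/ancP; exists (m + n)%N; exact: iterD.
Qed.

Lemma anc_root v : anc parent root v.
Proof. by apply/ancP; exists #|V|; rewrite iter_parent_root. Qed.

Lemma anc_total {u w v} : anc parent u v -> anc parent w v -> anc parent w u || anc parent u w.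
Proof.
move=> /ancP[i <-] /ancP[j <-]; apply/orP.
have [le_ij|/ltnW le_ji] := leqP i j; [left|right]; apply/ancP.
  by exists (j - i)%N; rewrite -iterD subnK.
by exists (i - j)%N; rewrite -iterD subnK.
Qed.

Lemma lcaC a b : lca parent root a b = lca parent root b a.
Proof.
rewrite /lca; congr odflt; apply: eq_pick => w /=; rewrite andbCA.
by congr (_ && (_ && _)); apply: eq_forallb => u; rewrite andbC.
Qed.

Lemma lcaP a b : [/\ anc parent (lca parent root a b) a, anc parent (lca parent root a b) b &
  forall u, anc parent u a -> anc parent u b -> anc parent u (lca parent root a b)].
Proof.
(* The lca is the first iterate of [parent] on [a] that is an ancestor of [b]. *)
have anc_b_ex : exists n, anc parent (iter n parent a) b.
  by exists #|V|; rewrite iter_parent_root ?anc_root.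
have [k k_b min_k] := ex_minnP anc_b_ex.
have lca_k : [&& anc parent (iter k parent a) a, anc parent (iter k parent a) b &
    [forall u, anc parent u a && anc parent u b ==> anc parent u (iter k parent a)]].
  rewrite k_b /=; apply/andP; split; first by apply/ancP; exists k.
  apply/forallP => u; apply/implyP => /andP[/ancP[j <-] j_b].
  by apply/ancP; exists (j - k)%N; rewrite -iterD subnK ?min_k.
rewrite /lca; case: pickP => [w /and3P[wa wb /forallP w_low] | /(_ (iter k parent a))].
  by split=> // u ua ub; apply: (implyP (w_low u)); rewrite ua ub.
by rewrite lca_k.
Qed.

End RootedTree.

Section LcaDistance.

Context {R : realType} {V : finType}.
Variables (parent : V -> V) (root : V) (d : V -> R) (z : nat).
Hypothesis tree : is_rooted_tree parent root.
Hypothesis adm : admissible parent root d.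
Implicit Types (u v a b c : V) (C : {set V}).

Lemma le_anc {u v} : anc parent u v -> d v <= d u.
Proof.
case: adm => _ d_le_parent /(ancP tree)[n <-]; elim: n => //= n IHn.
apply: le_trans IHn _; have [->|not_root] := eqVneq (iter n parent v) root.
  by case: tree => ->.
exact: d_le_parent.
Qed.

Lemma lca_ultra a b c :
  d (lca parent root a c) <= Order.max (d (lca parent root a b)) (d (lca parent root b c)).
Proof.
have [ab_a ab_b _] := lcaP tree a b; have [bc_b bc_c _] := lcaP tree b c.
have [_ _ ac_low] := lcaP tree a c.
rewrite le_max; case/orP: (anc_total tree ab_b bc_b) => [bc_ab|ab_bc]; apply/orP.
  have bc_a := anc_trans tree bc_ab ab_a.
  by right; apply/le_anc/ac_low.
have ab_c := anc_trans tree ab_bc bc_c.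
by left; apply/le_anc/ac_low.
Qed.

Definition lca_dist a b := d (lca parent root a b) ^+ z.

Lemma lca_distC a b : lca_dist a b = lca_dist b a.
Proof. by rewrite /lca_dist lcaC. Qed.

Lemma lca_dist_ultra a b c :
  lca_dist a c <= Order.max (lca_dist a b) (lca_dist b c).
Proof.
have d_ge0 := proj1 adm; rewrite /lca_dist !le_max.
have := lca_ultra a b c; rewrite le_max.
by case/orP => /(lerXn2r z (d_ge0 _) (d_ge0 _)) ->; rewrite ?orbT.
Qed.

Lemma lca_dist_le_root a b : lca_dist a b <= d root ^+ z.
Proof. by apply: lerXn2r (proj1 adm _) (proj1 adm _) _; apply/le_anc/anc_root. Qed.

Lemma cost_sumdist C : C != set0 ->
  cost parent root d z C = (sumdist lca_dist (d root ^+ z) (leaves parent) C)%:E.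
Proof.
move=> C0; rewrite /cost /sumdist -sumEFin; apply: eq_bigr => l _.
exact: setdist_EFin lca_dist_le_root _ _ C0.
Qed.

End LcaDistance.

Local Open Scope ereal_scope.

Theorem mainTheorem6 (R : realType) (V : finType) (parent : V -> V) (root : V)
  (d : V -> R) (z : nat) (Cs : nat -> {set V}) :
  is_rooted_tree parent root ->
  admissible parent root d ->
  (0 < z)%N ->
  Cs 0%N = set0 ->
  (forall i : nat, (1 <= i <= #|leaves parent|)%N ->
     exists c : V, [/\ c \in leaves parent, c \notin Cs i.-1,
       Cs i = c |: Cs i.-1 &
       forall c' : V, c' \in leaves parent -> c' \notin Cs i.-1 ->
         cost parent root d z (c |: Cs i.-1) <= cost parent root d z (c' |: Cs i.-1)]) ->
  forall k : nat, (1 <= k <= #|leaves parent|)%N ->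
    [/\ Cs k \subset leaves parent, #|Cs k| = k &
      forall C : {set V}, C \subset leaves parent -> #|C| = k ->
        cost parent root d z (Cs k) <= cost parent root d z C].
Proof.
move=> tree adm _ Cs0 Cs_greedy k /andP[k_gt0 k_le].
have cost_E := cost_sumdist z tree adm.
have setU1_neq0 c (C : {set V}) : c |: C != set0.
  by apply/set0Pn; exists c; rewrite setU11.
have [i i_range|CsL Csk Cs_opt] := greedy_sumdist_optimal _ _ (lca_distC parent root d z)
  (lca_dist_ultra z tree adm) (lca_dist_le_root z tree adm) Cs Cs0 _ k k_le.
  have [c [cL cC -> c_best]] := Cs_greedy i i_range.
  exists c; split=> // c' c'L c'C.
  by have := c_best c' c'L c'C; rewrite !cost_E ?setU1_neq0 // lee_fin.
split=> // C CL Ck; rewrite !cost_E ?lee_fin ?Cs_opt //.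
  by rewrite -card_gt0 Ck.
by rewrite -card_gt0 Csk.
Qed.
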